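(* Let $d_1,d_2\ge2$ and let $\rho_{12}$ be a (possibly mixed) density operator on $\mathbb{C}^{d_1}\otimes\mathbb{C}^{d_2}$. Write $t_{u_1,u_2}=\operatorname{tr}\big(\rho_{12}\,(A^{(1)}_{u_1})^{\dagger}\otimes(A^{(2)}_{u_2})^{\dagger}\big)$ for $0\le u_s\le d_s^2-1$, so that $\rho_{12}=\frac{1}{d_1d_2}\sum_{u_1,u_2}t_{u_1,u_2}A^{(1)}_{u_1}\otimes A^{(2)}_{u_2}$, and let $T^{(12)}$ be the vector with entries $t_{u_1,u_2}$ for $u_1\ne0$, $u_2\ne0$. Then $$\|T^{(12)}\|^2\le d_1d_2\Big(1-\frac{1}{d_1^2}-\frac{1}{d_2^2}\Big)+1.$$
   Context: Generalized Pauli operators: for an integer $d\ge2$, let $\omega$ be a fixed primitive $d$-th root of unity and let $E_{m,j}$ ($0\le m,j\le d-1$) be the $d\times d$ matrix units, with indices taken modulo $d$. Each $u\in\{0,\dots,d^2-1\}$ is written uniquely as $u=di+j$ with $0\le i,j\le d-1$, and one sets $A_u=A_{di+j}=\sum_{m=0}^{d-1}\omega^{im}E_{m,m+j}$. Thus $A_0=I_d$ and $\operatorname{tr}(A_uA_v^{\dagger})=d\,\delta_{uv}$. $A^{(s)}_u$ denotes these operators for $d=d_s$. For a complex vector $v$, $\|v\|=\sqrt{v^{\dagger}v}$. *)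

From HB Require Import structures.
From mathcomp Require Import all_boot all_order all_algebra.
From mathcomp Require Export complex mxtens.
Set Implicit Arguments.
Unset Strict Implicit.
Unset Printing Implicit Defensive.
Import Order.TTheory GRing.Theory Num.Theory.
Local Open Scope ring_scope.

Definition adjmx {C : numClosedFieldType} {m n : nat} (A : 'M[C]_(m, n)) : 'M[C]_(n, m) :=
  (map_mx Num.conj A)^T.

(* Generalized Pauli operator A_u, u = d*i + j, i = u %/ d, j = u %% d:
   A_{di+j} = sum_m omega^(i m) E_{m, m+j} (indices mod d). *)
Definition gpauli {C : numClosedFieldType} (d : nat) (omega : C) (u : nat) : 'M[C]_d :=
  \matrix_(m < d, n < d)
     (if ((n : nat) == ((m : nat) + u %% d) %% d)%N then omega ^+ ((u %/ d) * m)%N else 0).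

Definition density_op {C : numClosedFieldType} {n : nat} (rho : 'M[C]_n) : Prop :=
  [/\ adjmx rho = rho,
      (forall v : 'cV[C]_n, 0 <= ((adjmx v) *m rho *m v) 0 0)
    & \tr rho = 1].

Definition tcoef {C : numClosedFieldType} (d1 d2 : nat) (w1 w2 : C)
  (rho : 'M[C]_(d1 * d2)) (u1 u2 : nat) : C :=
  \tr (rho *m (adjmx (gpauli d1 w1 u1) *t adjmx (gpauli d2 w2 u2))).
Arguments tcoef {C} d1 d2 w1 w2 rho u1 u2.
Arguments gpauli {C} d omega u.

From HB Require Import structures.
From mathcomp Require Import all_boot all_order all_algebra.
From mathcomp Require Import complex mxtens.
From mathcomp Require Import sesquilinear spectral.
From mathcomp Require Import ring.
Set Implicit Arguments.
Unset Strict Implicit.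
Unset Printing Implicit Defensive.
Import Order.TTheory GRing.Theory Num.Theory.
Local Open Scope ring_scope.

(* Each coefficient t_{u1,u2} is linear in rho and |.|^2 is convex, so by the
   spectral decomposition it suffices to bound pure states rho = v v^+.  The
   generalized Pauli matrices form an orthogonal basis (a discrete Fourier
   transform along each diagonal), so by Parseval the sum of all |t|^2 is
   d1 d2 tr rho^2 = d1 d2, the sums along the axes u2 = 0 and u1 = 0 are
   d1 tr rho_1^2 and d2 tr rho_2^2, and t_00 = tr rho = 1.  For a pure state
   both reduced states have the same purity P (tr (M M^+)^2 = tr (M^+ M)^2 for
   the coefficient matrix M of v), and |tr rho_s|^2 <= d_s tr rho_s^2 gives
   d_s P >= 1.  Inclusion-exclusion leaves d1 d2 - (d1 + d2) P + 1, and
   d1 P >= d1 / d2, d2 P >= d2 / d1 yields the bound. *)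

Section Adjoint.
Variable C : numClosedFieldType.

Lemma adjmxE m n (A : 'M[C]_(m, n)) i j : adjmx A i j = (A j i)^*.
Proof. by rewrite !mxE. Qed.

Lemma adjmxK m n (A : 'M[C]_(m, n)) : adjmx (adjmx A) = A.
Proof. by apply/matrixP => i j; rewrite !adjmxE conjCK. Qed.

Lemma adjmxM m n p (A : 'M[C]_(m, n)) (B : 'M[C]_(n, p)) :
  adjmx (A *m B) = adjmx B *m adjmx A.
Proof. by rewrite /adjmx map_mxM trmx_mul. Qed.

Lemma adjmx1 n : adjmx (1%:M : 'M[C]_n) = 1%:M.
Proof. by rewrite /adjmx map_mx1 trmx1. Qed.

Lemma trmx_adj m n (A : 'M[C]_(m, n)) : (adjmx A)^T = adjmx A^T.
Proof. by rewrite /adjmx trmxK map_trmx trmxK. Qed.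

Lemma adjmx_trC m n (A : 'M[C]_(m, n)) : (A ^t*)%sesqui = adjmx A.
Proof. by rewrite /adjmx map_trmx. Qed.

Definition hsnorm2 m n (A : 'M[C]_(m, n)) : C := \sum_i \sum_j `|A i j| ^+ 2.

Lemma hsnorm2_trace m n (A : 'M[C]_(m, n)) : hsnorm2 A = \tr (A *m adjmx A).
Proof.
apply: eq_bigr => i _; rewrite mxE; apply: eq_bigr => j _.
by rewrite adjmxE normCK.
Qed.

Lemma hsnorm2_tr m n (A : 'M[C]_(m, n)) : hsnorm2 A^T = hsnorm2 A.
Proof.
by rewrite /hsnorm2 exchange_big; do 2!apply: eq_bigr => ? _; rewrite mxE.
Qed.

Lemma hsnorm2_mul_adj_swap m n (A : 'M[C]_(m, n)) :
  hsnorm2 (A *m adjmx A) = hsnorm2 (adjmx A *m A).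
Proof.
rewrite !hsnorm2_trace !adjmxM !adjmxK -!mulmxA mxtrace_mulC.
by rewrite -!mulmxA.
Qed.

Lemma hsnorm2_outer n (v : 'cV[C]_n) : hsnorm2 (v *m adjmx v) = hsnorm2 v ^+ 2.
Proof.
rewrite /hsnorm2 [RHS]expr2 mulr_suml; apply: eq_bigr => i _.
rewrite !big_ord1 mulr_sumr; apply: eq_bigr => j _.
by rewrite !mxE !big_ord1 !mxE normrM norm_conjC exprMn.
Qed.

End Adjoint.

Section Convexity.
Variable C : numClosedFieldType.

Lemma sqr_norm_convex_comb n (lam x : 'I_n -> C) :
  (forall k, 0 <= lam k) -> \sum_k lam k = 1 ->
  `|\sum_k lam k * x k| ^+ 2 <= \sum_k lam k * `|x k| ^+ 2.
Proof.
move=> lam_ge0 lam1; set m := \sum_k lam k * x k.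
have var_ge0 : 0 <= \sum_k lam k * `|x k - m| ^+ 2.
  by apply: sumr_ge0 => k _; rewrite mulr_ge0 ?exprn_ge0.
have varE k : lam k * `|x k - m| ^+ 2 = lam k * `|x k| ^+ 2
    - lam k * x k * m^* - m * (lam k * x k)^* + lam k * (m * m^*).
  by rewrite !normCK rmorphB rmorphM /= (geC0_conj (lam_ge0 k)); ring.
rewrite (eq_bigr _ (fun k _ => varE k)) big_split /= !sumrB in var_ge0.
rewrite -!mulr_suml -mulr_sumr -rmorph_sum -/m lam1 mul1r in var_ge0.
by rewrite -subr_ge0 normCK; move: var_ge0; congr (0 <= _); ring.
Qed.

Lemma sqr_norm_mxtrace n (A : 'M[C]_n) : `|\tr A| ^+ 2 <= n%:R * hsnorm2 A.
Proof.
case: n A => [|n] A; first by rewrite /mxtrace big_ord0 normr0 expr0n mul0r.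
have n_gt0 : 0 < n.+1%:R :> C by rewrite ltr0n.
pose lam (k : 'I_n.+1) : C := n.+1%:R^-1.
have lam1 : \sum_k lam k = 1.
  by rewrite sumr_const card_ord -[_ *+ _]mulr_natr mulVf ?gt_eqF.
have lam_ge0 k : 0 <= lam k by rewrite invr_ge0 ltW.
have := sqr_norm_convex_comb (fun k => n.+1%:R * A k k) lam_ge0 lam1.
rewrite /lam; under eq_bigr do rewrite mulKf ?gt_eqF //.
under [X in _ <= X -> _]eq_bigr do
  rewrite normrM exprMn ger0_norm ?ler0n // mulrA expr2 mulKf ?gt_eqF //.
rewrite -mulr_sumr => /le_trans; apply; rewrite ler_wpM2l ?ler0n //.
apply: ler_sum => i _; rewrite (bigD1 i) //= lerDl.
by apply: sumr_ge0 => j _; apply: exprn_ge0.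
Qed.

End Convexity.

Section Mixtures.
Variable C : numClosedFieldType.

Lemma hermitian_outer_decomposition n (A : 'M[C]_n) : adjmx A = A ->
  exists (lam : 'I_n -> C) (v : 'I_n -> 'cV[C]_n),
  (forall k l, adjmx (v k) *m v l = (k == l)%:R%:M)
    /\ A = \sum_k lam k *: (v k *m adjmx (v k)).
Proof.
move=> A_herm.
have : A \is normalmx.
  apply: hermitian_normalmx; rewrite is_hermitianmxE expr0 scale1r.
  by rewrite adjmx_trC A_herm.
move/orthomx_spectralP; set P := spectralmx A; set D := spectral_diag A.
have P_unitary : P \is unitarymx := spectral_unitarymx A.
rewrite invmx_unitary // adjmx_trC => AE.
exists (D 0), (fun k => adjmx (row k P)); split.
  move=> k l; apply/matrixP => i j; rewrite adjmxK !ord1.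
  move/unitarymxP: P_unitary; rewrite adjmx_trC => /matrixP/(_ k l).
  by rewrite !mxE eqxx mulr1n => <-; apply: eq_bigr => m _; rewrite !mxE.
rewrite {1}AE mul_mx_diag; apply/matrixP => i j; rewrite summxE !mxE.
apply: eq_bigr => k _; rewrite !mxE big_ord1 !mxE conjCK.
by rewrite mulrCA mulrA.
Qed.

Lemma density_op_mixture n (rho : 'M[C]_n) : density_op rho ->
  exists (lam : 'I_n -> C) (v : 'I_n -> 'cV[C]_n),
  [/\ forall k, 0 <= lam k, \sum_k lam k = 1, forall k, hsnorm2 (v k) = 1
    & rho = \sum_k lam k *: (v k *m adjmx (v k))].
Proof.
case=> rho_herm rho_psd rho_tr.
have [lam [v [v_orth rhoE]]] := hermitian_outer_decomposition rho_herm.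
have v_unit k : hsnorm2 (v k) = 1.
  by rewrite hsnorm2_trace mxtrace_mulC v_orth eqxx mxtrace_scalar.
have quad k l : adjmx (v k) *m (v l *m adjmx (v l)) *m v k = ((k == l)%:R)%:M.
  rewrite !mulmxA v_orth mul_scalar_mx -scalemxAl v_orth scale_scalar_mx.
  by rewrite eq_sym; case: (l == k); rewrite ?mulr1 ?mulr0.
exists lam, v; split => //.
- move=> k; have := rho_psd (v k).
  rewrite rhoE mulmx_sumr mulmx_suml summxE (bigD1 k) //= big1 ?addr0.
    by rewrite -scalemxAr -scalemxAl mxE quad eqxx mxE mulr1.
  move=> l neq_lk.
  by rewrite -scalemxAr -scalemxAl mxE quad eq_sym (negbTE neq_lk) mxE mulr0.
- rewrite -rho_tr rhoE raddf_sum /=; apply: eq_bigr => k _.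
  by rewrite mxtraceZ -hsnorm2_trace v_unit mulr1.
Qed.

End Mixtures.

Section Tensor.
Variable C : numClosedFieldType.
Variables m n : nat.
Implicit Types (X : 'M[C]_(m * n)) (v : 'cV[C]_(m * n)).

Lemma sum_mxtens_index (V : nmodType) (F : 'I_(m * n) -> V) :
  \sum_k F k = \sum_i \sum_j F (mxtens_index (i, j)).
Proof.
rewrite pair_big /= (reindex (@mxtens_index m n)) /=; last first.
  exists (@mxtens_unindex m n) => k _;
    by rewrite ?mxtens_indexK ?mxtens_unindexK.
by apply: eq_bigr => -[].
Qed.

Lemma tensmx11 : (1%:M : 'M[C]_m) *t (1%:M : 'M[C]_n) = 1%:M.
Proof.
apply/matrixP => k l.
case: (mxtens_indexP k) => i1 i2; case: (mxtens_indexP l) => j1 j2.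
rewrite tensmxE !mxE (inj_eq (can_inj (@mxtens_indexK m n))) xpair_eqE.
by case: (i1 == j1); case: (i2 == j2); rewrite ?mulr1 ?mulr0.
Qed.

Definition tens_block X i j : 'M[C]_n :=
  \matrix_(k, l) X (mxtens_index (i, k)) (mxtens_index (j, l)).

Lemma hsnorm2_tens_block X :
  \sum_i \sum_j hsnorm2 (tens_block X i j) = hsnorm2 X.
Proof.
rewrite /hsnorm2 sum_mxtens_index; apply: eq_bigr => i _.
under [RHS]eq_bigr do rewrite sum_mxtens_index.
rewrite exchange_big /=; apply: eq_bigr => k _.
by apply: eq_bigr => j _; apply: eq_bigr => l _; rewrite mxE.
Qed.

Definition tens_contract X (B : 'M[C]_n) : 'M[C]_m :=
  \matrix_(i, j) \tr (tens_block X i j *m B).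

Lemma mxtrace_mul_tensmx X (A : 'M[C]_m) (B : 'M[C]_n) :
  \tr (X *m (A *t B)) = \tr (tens_contract X B *m A).
Proof.
rewrite /mxtrace sum_mxtens_index; apply: eq_bigr => i _.
under eq_bigr do rewrite mxE sum_mxtens_index.
rewrite mxE exchange_big /=; apply: eq_bigr => j _.
rewrite !mxE mulr_suml; apply: eq_bigr => k _.
rewrite !mxE mulr_suml; apply: eq_bigr => l _.
by rewrite !mxE !mxtens_indexK -mulrA [B _ _ * _]mulrC.
Qed.

(* The reduced states: [ptrace2 X] is tr_2 X on the first factor, [ptrace1 X]
   is tr_1 X on the second. *)
Definition ptrace2 X : 'M[C]_m := tens_contract X 1%:M.

Definition ptrace1 X : 'M[C]_n :=
  \matrix_(k, l) \sum_i X (mxtens_index (i, k)) (mxtens_index (i, l)).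

Lemma mxtrace_mul_tensmx1 X (A : 'M[C]_m) :
  \tr (X *m (A *t 1%:M)) = \tr (ptrace2 X *m A).
Proof. exact: mxtrace_mul_tensmx. Qed.

Lemma mxtrace_mul_1tensmx X (B : 'M[C]_n) :
  \tr (X *m (1%:M *t B)) = \tr (ptrace1 X *m B).
Proof.
rewrite /mxtrace sum_mxtens_index exchange_big /=; apply: eq_bigr => k _.
rewrite mxE; under eq_bigr do rewrite mxE sum_mxtens_index.
under eq_bigr do under eq_bigr do under eq_bigr do
  rewrite tensmxE !mxE mulrCA mulr_natl mulrb.
under eq_bigr do rewrite exchange_big /=.
under eq_bigr do under eq_bigr do rewrite -big_mkcond /= big_pred1_eq.
rewrite exchange_big /=; apply: eq_bigr => l _.
by rewrite !mxE mulr_suml.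
Qed.

Lemma mxtrace_ptrace2 X : \tr (ptrace2 X) = \tr X.
Proof. by rewrite -[ptrace2 X]mulmx1 -mxtrace_mul_tensmx1 tensmx11 mulmx1. Qed.

Lemma mxtrace_ptrace1 X : \tr (ptrace1 X) = \tr X.
Proof. by rewrite -[ptrace1 X]mulmx1 -mxtrace_mul_1tensmx tensmx11 mulmx1. Qed.

Definition tens_coefmx (v : 'cV[C]_(m * n)) : 'M[C]_(m, n) :=
  \matrix_(i, k) v (mxtens_index (i, k)) 0.

Lemma ptrace2_outer v :
  ptrace2 (v *m adjmx v) = tens_coefmx v *m adjmx (tens_coefmx v).
Proof.
apply/matrixP => i j; rewrite !mxE mulmx1; apply: eq_bigr => k _.
by rewrite !mxE big_ord1 !mxE.
Qed.

Lemma ptrace1_outer v :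
  ptrace1 (v *m adjmx v) = (tens_coefmx v)^T *m adjmx (tens_coefmx v)^T.
Proof.
apply/matrixP => k l; rewrite !mxE; apply: eq_bigr => i _.
by rewrite !mxE big_ord1 !mxE.
Qed.

Lemma hsnorm2_ptrace_outer v :
  hsnorm2 (ptrace1 (v *m adjmx v)) = hsnorm2 (ptrace2 (v *m adjmx v)).
Proof.
rewrite ptrace1_outer ptrace2_outer -trmx_adj -trmx_mul hsnorm2_tr.
by rewrite hsnorm2_mul_adj_swap.
Qed.

End Tensor.

Section RootsOfUnity.
Variables (C : numClosedFieldType) (d : nat) (w : C).
Hypothesis w_prim : d.-primitive_root w.

Lemma prim_root_conjM : w^* * w = 1.
Proof.
have d_gt0 := prim_order_gt0 w_prim.
have w_norm : `|w| = 1.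
  apply/eqP; rewrite -(pexpr_eq1 d_gt0) ?normr_ge0 //.
  by rewrite -normrX prim_expr_order // normr1.
by rewrite mulrC -normCK w_norm expr1n.
Qed.

Lemma dft_orthogonality (a b : 'I_d) :
  \sum_(i < d) w^* ^+ (i * a) * w ^+ (i * b) = (a == b)%:R * d%:R.
Proof.
set z := w^* ^+ a * w ^+ b.
have zE i : w^* ^+ (i * a) * w ^+ (i * b) = z ^+ i.
  by rewrite exprMn -!exprM mulnC [(i * b)%N]mulnC.
under eq_bigr do rewrite zE.
have [eq_ab|neq_ab] := eqVneq a b.
  have z1 : z = 1 by rewrite /z eq_ab -exprMn prim_root_conjM expr1n.
  rewrite z1 mul1r; under eq_bigr do rewrite expr1n.
  by rewrite sumr_const card_ord.
have z_neq1 : z != 1.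
  apply: contra neq_ab => /eqP z1; apply/eqP/val_inj => /=.
  have : w ^+ a * z = w ^+ b.
    by rewrite /z mulrA -exprMn [w * _]mulrC prim_root_conjM expr1n mul1r.
  move/eqP; rewrite z1 mulr1 (eq_prim_root_expr w_prim) !modn_small //.
  by move/eqP.
have zd : z ^+ d = 1.
  rewrite exprMn -!exprM ![(_ * d)%N]mulnC !exprM -rmorphXn.
  by rewrite (prim_expr_order w_prim) rmorph1 !expr1n mulr1.
move/eqP: (subrX1 z d); rewrite zd subrr eq_sym mulf_eq0 subr_eq0.
by rewrite (negbTE z_neq1) mul0r => /eqP.
Qed.

Lemma dft_parseval (y : 'I_d -> C) :
  \sum_(i < d) `|\sum_(a < d) y a * w^* ^+ (i * a)| ^+ 2
    = d%:R * \sum_(a < d) `|y a| ^+ 2.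
Proof.
have expand i : `|\sum_(a < d) y a * w^* ^+ (i * a)| ^+ 2 =
    \sum_a \sum_b y a * (y b)^* * (w^* ^+ (i * a) * w ^+ (i * b)).
  rewrite normCK rmorph_sum mulr_suml; apply: eq_bigr => a _.
  rewrite mulr_sumr; apply: eq_bigr => b _.
  by rewrite rmorphM /= rmorphXn /= conjCK; ring.
under eq_bigr do rewrite expand.
rewrite exchange_big mulr_sumr; apply: eq_bigr => a _ /=.
rewrite exchange_big (bigD1 a) //= [X in _ + X]big1 => [|b neq_ba].
  by rewrite -mulr_sumr dft_orthogonality eqxx mul1r addr0 normCK mulrC.
by rewrite -mulr_sumr dft_orthogonality eq_sym (negbTE neq_ba) !mul0r mulr0.
Qed.

End RootsOfUnity.

Definition ord_shift d (j : nat) (a : 'I_d) : 'I_d :=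
  Ordinal (ltn_pmod (a + j) (leq_ltn_trans (leq0n a) (ltn_ord a))).

Lemma sum_ord_shift (V : nmodType) d (a : 'I_d) (F : 'I_d -> V) :
  \sum_(j < d) F (ord_shift j a) = \sum_(b < d) F b.
Proof.
symmetry; apply: (reindex_inj (h := fun j : 'I_d => ord_shift j a)).
move=> j k /(congr1 val) /eqP; rewrite /= eqn_modDl !modn_small //.
by move/eqP/val_inj.
Qed.

Section PauliCoefficients.
Variables (C : numClosedFieldType) (d : nat) (w : C).

Lemma gpauli0 : gpauli d w 0 = 1%:M.
Proof.
apply/matrixP => i j; rewrite !mxE mod0n div0n mul0n expr0 addn0 modn_small //.
by rewrite -(inj_eq val_inj) [(val i == _)]eq_sym; case: (_ == _).
Qed.

Definition pauli_coef (Y : 'M[C]_d) (u : nat) : C :=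
  \tr (Y *m adjmx (gpauli d w u)).

Lemma pauli_coefE Y u :
  pauli_coef Y u = \sum_a Y a (ord_shift (u %% d) a) * w^* ^+ (u %/ d * a).
Proof.
apply: eq_bigr => a _; rewrite mxE (bigD1 (ord_shift (u %% d) a)) //=.
rewrite adjmxE mxE eqxx rmorphXn big1 ?addr0 // => b neq_b.
rewrite adjmxE mxE; case: eqP => [eq_b|]; last by rewrite rmorph0 mulr0.
by case/eqP: neq_b; apply: val_inj.
Qed.

Hypothesis w_prim : d.-primitive_root w.

Lemma pauli_parseval Y :
  \sum_(u < d ^ 2) `|pauli_coef Y u| ^+ 2 = d%:R * hsnorm2 Y.
Proof.
have d_gt0 := prim_order_gt0 w_prim.
rewrite (sum_mxtens_index (fun u : 'I_(d * d) => `|pauli_coef Y u| ^+ 2)).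
rewrite exchange_big /=.
under eq_bigr => j _.
  under eq_bigr => i _.
    rewrite pauli_coefE /= divnMDl // modnMDl divn_small // modn_small // addn0.
    over.
  rewrite dft_parseval //.
  over.
rewrite /hsnorm2 -mulr_sumr exchange_big /=; congr (_ * _).
by apply: eq_bigr => a _; rewrite (sum_ord_shift a (fun b => `|Y a b| ^+ 2)).
Qed.

End PauliCoefficients.

Lemma sum_off_axes (V : zmodType) m n (F : nat -> nat -> V) :
  (0 < m)%N -> (0 < n)%N ->
  \sum_(i < m | i != 0%N :> nat) \sum_(j < n | j != 0%N :> nat) F i j
    = \sum_(i < m) \sum_(j < n) F i j - \sum_(i < m) F i 0%N
      - \sum_(j < n) F 0%N j + F 0%N 0%N.
Proof.
move=> m_gt0 n_gt0.
have sum_nz k (G : nat -> V) : (0 < k)%N ->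
    \sum_(i < k | i != 0%N :> nat) G i = \sum_(i < k) G i - G 0%N.
  move=> k_gt0; rewrite [in RHS](bigD1 (Ordinal k_gt0)) //= addrAC subrr add0r.
  by apply: eq_bigl => i; rewrite -(inj_eq val_inj).
under eq_bigr => i _ do rewrite (sum_nz _ (F i)) //.
rewrite (sum_nz _ (fun i => \sum_(j < n) F i j - F i 0%N)) //.
by rewrite sumrB opprB addrA addrAC.
Qed.

Section Correlations.
Variables (C : numClosedFieldType) (d1 d2 : nat) (w1 w2 : C).
Implicit Type X : 'M[C]_(d1 * d2).
Local Notation tcoef := (tcoef d1 d2 w1 w2).

Lemma tcoef_pauli_coef X u1 u2 :
  tcoef X u1 u2 = pauli_coef w1 (tens_contract X (adjmx (gpauli d2 w2 u2))) u1.
Proof. exact: mxtrace_mul_tensmx. Qed.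

Lemma tcoef_u0 X u1 : tcoef X u1 0 = pauli_coef w1 (ptrace2 X) u1.
Proof. by rewrite tcoef_pauli_coef gpauli0 adjmx1. Qed.

Lemma tcoef_0u X u2 : tcoef X 0 u2 = pauli_coef w2 (ptrace1 X) u2.
Proof. by rewrite /tcoef gpauli0 adjmx1 mxtrace_mul_1tensmx. Qed.

Lemma tcoef00 X : tcoef X 0 0 = \tr X.
Proof.
by rewrite tcoef_u0 /pauli_coef gpauli0 adjmx1 mulmx1 mxtrace_ptrace2.
Qed.

Lemma tcoef_sum n (lam : 'I_n -> C) (V : 'I_n -> 'M[C]_(d1 * d2)) u1 u2 :
  tcoef (\sum_k lam k *: V k) u1 u2 = \sum_k lam k * tcoef (V k) u1 u2.
Proof.
rewrite /tcoef mulmx_suml raddf_sum /=; apply: eq_bigr => k _.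
by rewrite -scalemxAl mxtraceZ.
Qed.

Definition corr_norm2 X : C :=
  \sum_(u1 < d1 ^ 2 | u1 != 0%N :> nat) \sum_(u2 < d2 ^ 2 | u2 != 0%N :> nat)
    `|tcoef X u1 u2| ^+ 2.

Lemma corr_norm2_convex n (lam : 'I_n -> C) (V : 'I_n -> 'M[C]_(d1 * d2)) :
  (forall k, 0 <= lam k) -> \sum_k lam k = 1 ->
  corr_norm2 (\sum_k lam k *: V k) <= \sum_k lam k * corr_norm2 (V k).
Proof.
move=> lam_ge0 lam1; rewrite /corr_norm2.
under [X in _ <= X]eq_bigr do rewrite mulr_sumr.
rewrite [X in _ <= X]exchange_big /=; apply: ler_sum => u1 _.
under [X in _ <= X]eq_bigr do rewrite mulr_sumr.
rewrite [X in _ <= X]exchange_big /=; apply: ler_sum => u2 _.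
by rewrite tcoef_sum; apply: sqr_norm_convex_comb.
Qed.

Hypotheses (w1_prim : d1.-primitive_root w1) (w2_prim : d2.-primitive_root w2).

Lemma tcoef_parseval X :
  \sum_(u1 < d1 ^ 2) \sum_(u2 < d2 ^ 2) `|tcoef X u1 u2| ^+ 2
    = (d1 * d2)%:R * hsnorm2 X.
Proof.
rewrite exchange_big /=.
under eq_bigr do under eq_bigr do rewrite tcoef_pauli_coef.
under eq_bigr do rewrite pauli_parseval //.
rewrite -mulr_sumr natrM -mulrA; congr (_ * _).
transitivity (\sum_i \sum_j
    \sum_(u < d2 ^ 2) `|pauli_coef w2 (tens_block X i j) u| ^+ 2).
  rewrite exchange_big; apply: eq_bigr => i _.
  rewrite exchange_big; apply: eq_bigr => j _.
  by apply: eq_bigr => u _; rewrite mxE.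
rewrite -hsnorm2_tens_block mulr_sumr; apply: eq_bigr => i _.
by rewrite mulr_sumr; apply: eq_bigr => j _; apply: pauli_parseval.
Qed.

Lemma corr_norm2_outer_le (v : 'cV[C]_(d1 * d2)) : hsnorm2 v = 1 ->
  corr_norm2 (v *m adjmx v)
    <= (d1 * d2)%:R * (1 - 1 / (d1 ^ 2)%:R - 1 / (d2 ^ 2)%:R) + 1.
Proof.
move=> v_unit; rewrite /corr_norm2; set X := v *m adjmx v.
have d1_gt0 := prim_order_gt0 w1_prim; have d2_gt0 := prim_order_gt0 w2_prim.
have trX : \tr X = 1 by rewrite -hsnorm2_trace.
set P := hsnorm2 (ptrace2 X).
have P1 : 1 <= d1%:R * P.
  have := sqr_norm_mxtrace (ptrace2 X).
  by rewrite mxtrace_ptrace2 trX normr1 expr1n.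
have P2 : 1 <= d2%:R * P.
  have := sqr_norm_mxtrace (ptrace1 X).
  by rewrite mxtrace_ptrace1 trX normr1 expr1n hsnorm2_ptrace_outer.
rewrite (sum_off_axes (fun u1 u2 => `|tcoef X u1 u2| ^+ 2))
  ?expn_gt0 ?d1_gt0 ?d2_gt0 //.
rewrite tcoef_parseval hsnorm2_outer v_unit expr1n mulr1.
under eq_bigr do rewrite tcoef_u0; rewrite pauli_parseval // -/P.
under eq_bigr do rewrite tcoef_0u.
rewrite pauli_parseval // hsnorm2_ptrace_outer -/P.
rewrite tcoef00 trX normr1 expr1n lerD2r.
have d1R : 0 < d1%:R :> C by rewrite ltr0n.
have d2R : 0 < d2%:R :> C by rewrite ltr0n.
have -> : (d1 * d2)%:R * (1 - 1 / (d1 ^ 2)%:R - 1 / (d2 ^ 2)%:R)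
    = (d1 * d2)%:R - d1%:R / d2%:R - d2%:R / d1%:R :> C.
  by rewrite natrM !natrX; field; rewrite !gt_eqF.
apply: lerB; first apply: lerB => //.
  by rewrite ler_pdivrMr // -mulrA ler_pMr // mulrC.
by rewrite ler_pdivrMr // -mulrA ler_pMr // mulrC.
Qed.

End Correlations.

Theorem lemma2 (R : rcfType) (d1 d2 : nat) (w1 w2 : R[i])
  (rho : 'M[R[i]]_(d1 * d2)) :
  (2 <= d1)%N -> (2 <= d2)%N ->
  d1.-primitive_root w1 -> d2.-primitive_root w2 ->
  density_op rho ->
  \sum_(u1 < d1 ^ 2 | u1 != 0%N :> nat) \sum_(u2 < d2 ^ 2 | u2 != 0%N :> nat)
      `|tcoef d1 d2 w1 w2 rho u1 u2| ^+ 2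
    <= (d1 * d2)%:R * (1 - 1 / (d1 ^ 2)%:R - 1 / (d2 ^ 2)%:R) + 1.
Proof.
move=> _ _ w1_prim w2_prim /density_op_mixture.
case=> lam [v [lam_ge0 lam1 v_unit ->]].
pose pure k := v k *m adjmx (v k).
apply: le_trans (corr_norm2_convex w1 w2 pure lam_ge0 lam1) _.
set bound := _ + 1; rewrite -[bound]mul1r -lam1 mulr_suml.
by apply: ler_sum => k _; rewrite ler_wpM2l //; apply: corr_norm2_outer_le.
Qed.
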